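(* $\mathrm{Fin}(6)=\mathrm{Adm}(6)$.
   Context: $K_4-e$ is the graph on four vertices $a,b,c,d$ with edges $ab,ac,ad,bc,bd$; it is denoted $[a,b,c-d]$. A $(K_4-e)$-design of order $v$ is a pair $(X,\mathcal B)$ where $X$ is a set of $v$ vertices and $\mathcal B$ is a collection of copies of $K_4-e$ (blocks) with vertices in $X$ whose edge sets partition the edges of $K_v$ on $X$; it has $b_v=v(v-1)/10$ blocks. For a graph $B$, $T(B)$ is the set of its triangles (3-vertex subsets inducing a triangle); e.g. $T([a,b,c-d])=\{\{a,b,c\},\{a,b,d\}\}$, and $T(\mathcal B)=\bigcup_{B\in\mathcal B}T(B)$. Two designs $(X,\mathcal B_1),(X,\mathcal B_2)$ on the same vertex set intersect in $s$ blocks if $|\mathcal B_1\cap\mathcal B_2|=s$, and in $t$ triangles if $|T(\mathcal B_1)\cap T(\mathcal B_2)|=t$. Define $\mathrm{Fin}(v)=\{(s,t):$ there exists a pair of $(K_4-e)$-designs of order $v$ on the same vertex set intersecting in $s$ blocks and $t+2s$ triangles$\}$; $J(v)=\{s:$ there is a pair of $(K_4-e)$-designs of order $v$ intersecting in $s$ blocks$\}$; $J_T(v)=\{t:$ there is a pair of $(K_4-e)$-designs of order $v$ intersecting in $t$ triangles$\}$; and $\mathrm{Adm}(v)=\{(s,t): s,t\ge 0,\ s+t\le b_v,\ s\in J(v),\ t+2s\in J_T(v)\}$. (Known from the literature: $J(6)=\{0,3\}$ and $J_T(6)=\{0,2,3,6\}$, so $\mathrm{Adm}(6)=\{(0,0),(0,2),(0,3),(3,0)\}$.)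 *)

From mathcomp Require Import all_boot.
Set Implicit Arguments. Unset Strict Implicit. Unset Printing Implicit Defensive.

(* Vertex set X of order v is taken to be 'I_v.  An edge is a 2-subset of X;
   a graph (block) is represented by its edge set. *)

(* The edge set of the block [a,b,c-d]: edges ab, ac, ad, bc, bd. *)
Definition K4e_edges (v : nat) (a b c d : 'I_v) : {set {set 'I_v}} :=
  [set [set a; b]; [set a; c]; [set a; d]; [set b; c]; [set b; d]].

Definition is_block (v : nat) (B : {set {set 'I_v}}) : Prop :=
  exists a b c d : 'I_v, uniq [:: a; b; c; d] /\ B = K4e_edges a b c d.

Definition Kv_edges (v : nat) : {set {set 'I_v}} := [set e : {set 'I_v} | #|e| == 2].

Definition is_design (v : nat) (D : {set {set {set 'I_v}}}) : Prop :=
  (forall B, B \in D -> is_block B) /\ partition D (Kv_edges v).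

Definition triangles (v : nat) (B : {set {set 'I_v}}) : {set {set 'I_v}} :=
  [set t : {set 'I_v} | (#|t| == 3) &&
     [forall x in t, forall y in t, (x != y) ==> ([set x; y] \in B)]].

Definition triangles_of (v : nat) (D : {set {set {set 'I_v}}}) : {set {set 'I_v}} :=
  \bigcup_(B in D) triangles B.

Definition b_v (v : nat) : nat := v * (v - 1) %/ 10.

Definition Fin (v s t : nat) : Prop :=
  exists D1 D2 : {set {set {set 'I_v}}},
    [/\ is_design D1, is_design D2, #|D1 :&: D2| = s &
        #|triangles_of D1 :&: triangles_of D2| = t + 2 * s].

Definition J (v s : nat) : Prop :=
  exists D1 D2 : {set {set {set 'I_v}}},
    [/\ is_design D1, is_design D2 & #|D1 :&: D2| = s].

Definition J_T (v t : nat) : Prop :=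
  exists D1 D2 : {set {set {set 'I_v}}},
    [/\ is_design D1, is_design D2 & #|triangles_of D1 :&: triangles_of D2| = t].

Definition Adm (v s t : nat) : Prop :=
  [/\ s + t <= b_v v, J v s & J_T v (t + 2 * s)].

From mathcomp Require Import all_boot zify.
Set Implicit Arguments. Unset Strict Implicit. Unset Printing Implicit Defensive.

(* A (K4-e)-design of order 6 has three blocks, and each edge of K6 lies in exactly one of
   them.  Choosing, three times, a block through the first edge not yet covered that is
   compatible with the blocks already chosen therefore reaches every design, and a finite
   search enumerates all of them as block lists.  Comparing all pairs shows that two designs
   of order 6 either share no block and at most three triangles, or share all three blocks
   and all six triangles.  This dichotomy gives Fin 6 <= Adm 6 directly.  Conversely an
   admissible (s, t) has s = 0, realised by any pair witnessing t \in J_T 6, or s = 3 and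
   t = 0, realised by any pair witnessing 3 \in J 6. *)

Lemma eq_set2 (T : finType) (x y u v : T) :
  ([set x; y] == [set u; v]) = ((x, y) == (u, v)) || ((x, y) == (v, u)).
Proof.
rewrite !xpair_eqE; apply/eqP/idP => [E | /orP[] /andP[/eqP-> /eqP->] //].
  have xE : x \in [set u; v] by rewrite -E set21.
  have yE : y \in [set u; v] by rewrite -E set22.
  have uE : u \in [set x; y] by rewrite E set21.
  have vE : v \in [set x; y] by rewrite E set22.
  move: xE yE uE vE; rewrite !inE.
  by do 4!case/orP=> /eqP ?; subst; rewrite ?eqxx ?orbT.
exact: setUC.
Qed.

Lemma cards3 (T : finType) (x y z : T) : uniq [:: x; y; z] -> #|[set x; y; z]| = 3.
Proof.
rewrite /= !inE negb_or andbT => /andP[/andP[xy xz] yz].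
by rewrite -setUA cardsU1 cards2 !inE negb_or xy xz yz.
Qed.

Lemma uniq4_neq (T : eqType) (a b c d : T) : uniq [:: a; b; c; d] ->
  [&& a != b, a != c & a != d] /\ [&& b != c, b != d & c != d].
Proof. by rewrite /= !inE !negb_or !andbT => /and3P[-> /andP[-> ->] ->]. Qed.

Lemma triangleP (v : nat) (B : {set {set 'I_v}}) (t : {set 'I_v}) :
  reflect (#|t| = 3 /\ {in t &, forall x y, x != y -> [set x; y] \in B}) (t \in triangles B).
Proof.
rewrite inE; apply: (iffP andP) => [[/eqP t3 /forall_inP tB] | [t3 tB]].
  by split=> // x y xt yt xy; move/forall_inP: (tB x xt) => /(_ y yt); rewrite xy.
split; first exact/eqP.
by apply/forall_inP => x xt; apply/forall_inP => y yt; apply/implyP; apply: tB.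
Qed.

Section K4e.
Variables (v : nat) (a b c d : 'I_v).
Hypothesis abcd : uniq [:: a; b; c; d].

Lemma K4e_edgesC12 : K4e_edges b a c d = K4e_edges a b c d.
Proof. by apply/setP => e; rewrite !inE (setUC [set b]); do 5!case: (e == _). Qed.

Lemma K4e_edgesC34 : K4e_edges a b d c = K4e_edges a b c d.
Proof. by apply/setP => e; rewrite !inE; do 5!case: (e == _). Qed.

Lemma K4e_vertices e : e \in K4e_edges a b c d -> e \subset [set a; b; c; d].
Proof.
by rewrite !inE -!orbA => /or4P[| | | /orP[]] /eqP->; apply/subsetP => x; rewrite !inE;
  case/orP=> ->; rewrite ?orbT.
Qed.

Lemma K4e_edges_sub : K4e_edges a b c d \subset Kv_edges v.
Proof.
have [/and3P[ab ac ad] /and3P[bc bd _]] := uniq4_neq abcd.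
apply/subsetP => e; rewrite !inE -!orbA => /or4P[| | | /orP[]] /eqP->;
  by rewrite cards2 ?ab ?ac ?ad ?bc ?bd.
Qed.

Lemma K4e_nonedge : [set c; d] \notin K4e_edges a b c d.
Proof.
have [/and3P[_ ac ad] /and3P[bc bd cd]] := uniq4_neq abcd.
by rewrite !inE !eq_set2 !xpair_eqE ![c == _]eq_sym ![d == _]eq_sym
  (negbTE ac) (negbTE ad) (negbTE bc) (negbTE bd) (negbTE cd) !andbF.
Qed.

Lemma triangle_K4e_sub t : t \in triangles (K4e_edges a b c d) -> t \subset [set a; b; c; d].
Proof.
case/triangleP => t3 tB; apply/subsetP => x xt.
have tx2 : #|t :\ x| = 2 by move: t3; rewrite (cardsD1 x) xt => -[].
have /set0Pn[y /setD1P[yx yt]] : t :\ x != set0 by rewrite -card_gt0 tx2.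
have xy : x != y by rewrite eq_sym.
exact: subsetP (K4e_vertices (tB x y xt yt xy)) x (set21 x y).
Qed.

Lemma triangles_K4e : triangles (K4e_edges a b c d) = [set [set a; b; c]; [set a; b; d]].
Proof.
have [/and3P[ab ac ad] /and3P[bc bd cd]] := uniq4_neq abcd.
apply/setP => t; rewrite in_set2; apply/idP/orP => [tT | ].
  have [t3 tB] := triangleP _ _ tT; have /subsetP tS := triangle_K4e_sub tT.
  have not_cd : (c \in t) && (d \in t) = false.
    apply/negP => /andP[ct dt].
    by move: (tB c d ct dt cd); rewrite (negbTE K4e_nonedge).
  have tE w : uniq [:: a; b; w] -> {subset t <= [set a; b; w]} -> t == [set a; b; w].
    by move=> abw tw; rewrite eqEcard (cards3 abw) t3 leqnn andbT; apply/subsetP.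
  have [dt | dt] := boolP (d \in t); [right | left]; apply: tE => [|x xt].
  - by rewrite /= !inE !negb_or ab ad bd.
  - have xc : x != c by apply: contraFneq not_cd => <-; rewrite xt dt.
    by move: (tS x xt); rewrite !inE (negbTE xc) orbF.
  - by rewrite /= !inE !negb_or ab ac bc.
  - have xd : x != d by apply: contraNneq dt => <-.
    by move: (tS x xt); rewrite !inE (negbTE xd) orbF.
case=> /eqP->; apply/triangleP;
  split; rewrite ?cards3 //= ?inE ?negb_or ?ab ?ac ?ad ?bc ?bd //;
  move=> x y /[!inE] /orP[/orP[]|] /eqP-> /orP[/orP[]|] /eqP->; rewrite ?eqxx // => _;
  by rewrite ?inE ?eq_set2 ?eqxx ?orbT ?orTb.
Qed.
End K4e.

Definition count_common (T : eqType) (s1 s2 : seq T) : nat :=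
  size (undup [seq y <- s1 | y \in s2]).

Lemma card_setI_seq (T : finType) (U : eqType) (f : T -> U) (s1 s2 : seq T) :
  {in s1 ++ s2 &, injective f} ->
  #|[set:: s1] :&: [set:: s2]| = count_common (map f s1) (map f s2).
Proof.
move=> f_inj; rewrite /count_common; set s := [seq x <- s1 | x \in s2].
have -> : [set:: s1] :&: [set:: s2] = [set:: s].
  by apply/setP => x; rewrite !inE mem_filter andbC.
have s_inj : {in s &, injective f}.
  by move=> x y; rewrite !mem_filter => /andP[_ xs1] /andP[_ ys1]; apply: f_inj;
    rewrite mem_cat ?xs1 ?ys1.
have -> : [seq y <- map f s1 | y \in map f s2] = map f s.
  rewrite filter_map; congr map; apply: eq_in_filter => x xs1 /=.
  apply/mapP/idP => [[y ys2 fxy] | xs2]; last by exists x.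
  by rewrite (f_inj x y) ?mem_cat ?xs1 ?ys2 ?orbT.
have fs_uniq : uniq (map f (undup s)).
  by rewrite map_inj_in_uniq ?undup_uniq // => x y; rewrite !mem_undup; apply: s_inj.
rewrite cardsE -(eq_card (mem_undup s)) (card_uniqP (undup_uniq s)) -(size_map f).
rewrite -(undup_id fs_uniq); apply/perm_size/perm_undup => y.
by apply/mapP/mapP => -[x xs ->]; exists x; rewrite ?mem_undup in xs *.
Qed.

Section Designs.
Variables (v : nat) (D : {set {set {set 'I_v}}}).
Hypothesis designD : is_design D.

Lemma design_block_eq B1 B2 e : B1 \in D -> B2 \in D -> e \in B1 -> e \in B2 -> B1 = B2.
Proof.
case: designD => _ /and3P[_ trivD _] B1D B2D eB1 eB2; case: (eqVneq B1 B2) => // B12.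
by rewrite (disjointFr (trivIsetP trivD B1 B2 B1D B2D B12) eB1) in eB2.
Qed.

Lemma design_cover e : e \in Kv_edges v -> exists2 B, B \in D & e \in B.
Proof. by case: designD => _ /and3P[/eqP <- _ _] /bigcupP[B]; exists B. Qed.
End Designs.

Definition vertices6 : seq 'I_6 :=
  [:: @Ordinal 6 0 isT; @Ordinal 6 1 isT; @Ordinal 6 2 isT;
      @Ordinal 6 3 isT; @Ordinal 6 4 isT; @Ordinal 6 5 isT].

Lemma mem_vertices6 x : x \in vertices6.
Proof. by case: x => [[|[|[|[|[|[|k]]]]]] ?]. Qed.

Definition edges6 : seq ('I_6 * 'I_6) :=
  [seq e : 'I_6 * 'I_6 <- [seq (x, y) | x <- vertices6, y <- vertices6] | e.1 < e.2].

Lemma mem_edges6 x y : ((x, y) \in edges6) = (x < y).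
Proof.
rewrite mem_filter andb_idr // => _.
by apply/allpairsP; exists (x, y); rewrite !mem_vertices6.
Qed.

Lemma edges6P x y : x != y -> exists2 e, e \in edges6 & [set x; y] = [set e.1; e.2].
Proof.
rewrite neq_ltn => /orP[xy | yx]; first by exists (x, y); rewrite ?mem_edges6.
by exists (y, x); rewrite ?mem_edges6 // setUC.
Qed.

Lemma Kv_edges6P e : e \in Kv_edges 6 -> exists2 p, p \in edges6 & e = [set p.1; p.2].
Proof. by rewrite inE => /cards2P[x [y [xy ->]]]; apply: edges6P. Qed.

(* The quadruple (a, b, c, d) encodes the block [a,b,c-d]; [blocks6] lists every copy of K4-e
   in K6 exactly once, normalised by a < b and c < d. *)
Definition quad := ('I_6 * 'I_6 * 'I_6 * 'I_6)%type.

Definition block_of (q : quad) : {set {set 'I_6}} :=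
  let: (a, b, c, d) := q in K4e_edges a b c d.

(* Computed predicates compare vertices as natural numbers: evaluating the eqType instance of
   ['I_6] at every comparison would dominate [vm_compute]. *)
Definition quad_uniq (q : quad) : bool :=
  let: (a, b, c, d) := q in uniq [:: a : nat; b : nat; c : nat; d : nat].

Lemma quad_uniqE a b c d : quad_uniq (a, b, c, d) = uniq [:: a; b; c; d].
Proof. exact: (map_inj_uniq val_inj [:: a; b; c; d]). Qed.

Definition blocks6 : seq quad :=
  [seq q <- [seq (e.1, e.2, f.1, f.2) | e <- edges6, f <- edges6] | quad_uniq q].

Lemma block_of_sub q : q \in blocks6 -> block_of q \subset Kv_edges 6.
Proof.
by case: q => [[[a b] c] d]; rewrite mem_filter quad_uniqE => /andP[/K4e_edges_sub].
Qed.

Lemma blocks6_complete B : is_block B -> exists2 q, q \in blocks6 & B = block_of q.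
Proof.
case=> a [b [c [d [abcd ->]]]].
have normal (a' b' c' d' : 'I_6) : uniq [:: a'; b'; c'; d'] -> a' < b' -> c' < d' ->
    exists2 q, q \in blocks6 & K4e_edges a' b' c' d' = block_of q.
  move=> U ab cd; exists (a', b', c', d') => //; rewrite mem_filter.
  rewrite quad_uniqE U.
  by apply/allpairsP; exists ((a', b'), (c', d')); rewrite !mem_edges6.
have [/and3P[ab _ _] /and3P[_ _ cd]] := uniq4_neq abcd.
have Uba : uniq [:: b; a; c; d].
  by rewrite (perm_uniq (permEl (perm_catCA [:: b] [:: a] [:: c; d]))).
have Udc (x y : 'I_6) : uniq [:: x; y; c; d] -> uniq [:: x; y; d; c].
  rewrite (perm_uniq (_ : perm_eq [:: x; y; d; c] [:: x; y; c; d])) // !perm_cons.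
  exact: permEl (perm_catC [:: d] [:: c]).
move: ab cd; rewrite !neq_ltn => /orP[ab|ba] /orP[cd|dc].
- exact: normal.
- by rewrite -K4e_edgesC34; apply: normal; rewrite ?Udc.
- by rewrite -K4e_edgesC12; apply: normal.
- by rewrite -K4e_edgesC12 -K4e_edgesC34; apply: normal; rewrite ?Udc.
Qed.

Definition quad_edges (q : quad) : seq ('I_6 * 'I_6) :=
  let: (a, b, c, d) := q in [:: (a, b); (a, c); (a, d); (b, c); (b, d)].

Definition same_pair (e p : 'I_6 * 'I_6) : bool :=
  (nat_of_ord e.1 == p.1) && (nat_of_ord e.2 == p.2).

Definition quad_has_edge (q : quad) (e : 'I_6 * 'I_6) : bool :=
  has (fun p => same_pair e p || same_pair e (p.2, p.1)) (quad_edges q).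

Lemma mem_block_of q x y : ([set x; y] \in block_of q) = quad_has_edge q (x, y).
Proof.
by case: q => [[[a b] c] d]; rewrite /quad_has_edge /= !inE !eq_set2 !xpair_eqE orbF -!orbA.
Qed.

Definition edge_code (B : {set {set 'I_6}}) : seq bool :=
  [seq [set e.1; e.2] \in B | e <- edges6].

Definition block_code (q : quad) : seq bool := [seq quad_has_edge q e | e <- edges6].

Lemma edge_code_block_of q : edge_code (block_of q) = block_code q.
Proof. by apply: eq_map => -[x y]; rewrite mem_block_of. Qed.

Lemma edge_code_inj (B1 B2 : {set {set 'I_6}}) :
  B1 \subset Kv_edges 6 -> B2 \subset Kv_edges 6 -> edge_code B1 = edge_code B2 -> B1 = B2.
Proof.
suff sub (B B' : {set {set 'I_6}}) :
    B \subset Kv_edges 6 -> edge_code B = edge_code B' -> {subset B <= B'}.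
  by move=> B1K B2K codeE; apply/eqP; rewrite eqEsubset; apply/andP; split;
    apply/subsetP; apply: sub.
move=> /subsetP BK /eq_in_map codeE e eB; have [p pE eE] := Kv_edges6P (BK e eB).
by move: eB; rewrite eE (codeE p pE).
Qed.

Definition compatible (q r : quad) : bool :=
  ~~ has (fun e => quad_has_edge q e && quad_has_edge r e) edges6
  || (block_code q == block_code r).

Definition uncovered (qs : seq quad) : seq ('I_6 * 'I_6) :=
  [seq e <- edges6 | ~~ has (quad_has_edge^~ e) qs].

Fixpoint greedy_covers (n : nat) (qs : seq quad) : seq (seq quad) :=
  match n, uncovered qs with
  | n'.+1, e :: _ =>
      flatten [seq greedy_covers n' (rcons qs q)
              | q <- blocks6 & quad_has_edge q e && all (compatible q) qs]
  | _, _ => [:: qs]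
  end.

Lemma greedy_coversS n qs : greedy_covers n.+1 qs =
  if uncovered qs is e :: _ then
    flatten [seq greedy_covers n (rcons qs q)
            | q <- blocks6 & quad_has_edge q e && all (compatible q) qs]
  else [:: qs].
Proof. by []. Qed.

Definition designs6 : seq (seq quad) := greedy_covers 3 [::].

Lemma designs6_cover : all (fun l => uncovered l == [::]) designs6.
Proof. by vm_compute. Qed.

Lemma uncovered_nil_cover l e :
  uncovered l = [::] -> e \in edges6 -> has (quad_has_edge^~ e) l.
Proof.
move=> uncov eE; apply: contraT => nh.
have : e \in uncovered l by rewrite mem_filter nh eE.
by rewrite uncov.
Qed.


Section Classification.
Variable D : {set {set {set 'I_6}}}.
Hypothesis designD : is_design D.

Let in_D (q : quad) : bool := (q \in blocks6) && (block_of q \in D).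

Lemma compatible_in_design q r : block_of q \in D -> block_of r \in D -> compatible q r.
Proof.
move=> qD rD; apply/orP; case: hasP => [[[x y] _ /andP[qxy rxy]]|]; [right | by left].
by rewrite -!edge_code_block_of (design_block_eq designD qD rD (e := [set x; y]))
  ?mem_block_of.
Qed.

Lemma greedy_covers_design n qs :
  all in_D qs -> exists2 l, l \in greedy_covers n qs & all in_D l.
Proof.
elim: n qs => [|n IH] qs qsD; first by exists qs; rewrite // mem_seq1.
rewrite greedy_coversS.
case uncov: (uncovered qs) => [|[x y] es]; first by exists qs; rewrite // mem_seq1.
have : (x, y) \in uncovered qs by rewrite uncov mem_head.
rewrite mem_filter => /andP[_ xyE].
have xyK : [set x; y] \in Kv_edges 6 by rewrite inE cards2 neq_ltn -mem_edges6 xyE.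
have [B BD xyB] := design_cover designD xyK.
have [q q6 Bq] := blocks6_complete (designD.1 B BD).
have qD : in_D q by rewrite /in_D q6 -Bq.
have [|l lG lD] := IH (rcons qs q); first by rewrite all_rcons qD.
exists l => //; apply/flattenP; exists (greedy_covers n (rcons qs q)) => //.
apply: (map_f (fun q => greedy_covers n (rcons qs q))).
rewrite mem_filter q6 andbT -mem_block_of -Bq xyB /=.
by apply/allP => r /(allP qsD)/andP[_ rD]; apply: compatible_in_design; rewrite -?Bq.
Qed.

Lemma design6_classification :
  exists2 l, l \in designs6 & {subset l <= blocks6} /\ D = [set:: map block_of l].
Proof.
have [l lG /allP lD] := greedy_covers_design 3 (qs := [::]) isT.
exists l => //; split=> [q /lD/andP[] // |].
apply/setP => B; rewrite inE; apply/idP/mapP => [BD | [q /lD/andP[_ qD] ->] //].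
have [a [b [c [d [abcd BE]]]]] := designD.1 B BD.
have [/and3P[ab _ _] _] := uniq4_neq abcd.
have [e eE abE] := edges6P ab.
have /hasP[q ql qe] := uncovered_nil_cover (eqP (allP designs6_cover l lG)) eE.
have /andP[_ qD] := lD q ql.
exists q => //; apply: (design_block_eq designD BD qD (e := [set a; b])).
  by rewrite BE !inE eqxx.
by rewrite abE mem_block_of -surjective_pairing.
Qed.
End Classification.

Definition quad_triangles (q : quad) : seq {set 'I_6} :=
  let: (a, b, c, d) := q in [:: [set a; b; c]; [set a; b; d]].

Lemma triangles_block_of q :
  q \in blocks6 -> triangles (block_of q) = [set:: quad_triangles q].
Proof.
case: q => [[[a b] c] d]; rewrite mem_filter quad_uniqE => /andP[abcd _].
by rewrite /= triangles_K4e //; apply/setP => t; rewrite !inE.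
Qed.

Lemma triangles_of_blocks l : {subset l <= blocks6} ->
  triangles_of [set:: map block_of l] = [set:: flatten (map quad_triangles l)].
Proof.
move=> l6; apply/setP => t; rewrite inE; apply/bigcupP/flattenP.
  case=> B; rewrite inE => /mapP[q ql ->]; rewrite triangles_block_of ?l6 // inE => tq.
  by exists (quad_triangles q) => //; apply: map_f.
case=> s /mapP[q ql ->] tq; exists (block_of q); first by rewrite inE map_f.
by rewrite triangles_block_of ?l6 // inE.
Qed.

Definition vertex_code (A : {set 'I_6}) : seq bool := [seq x \in A | x <- vertices6].

Lemma vertex_code_inj : injective vertex_code.
Proof. by move=> A B /eq_in_map AB; apply/setP => x; apply: AB; apply: mem_vertices6. Qed.

Definition triple_code (a b c : 'I_6) : seq bool :=
  [seq [|| nat_of_ord x == a, nat_of_ord x == b | nat_of_ord x == c] | x <- vertices6].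

Definition triangle_codes (q : quad) : seq (seq bool) :=
  let: (a, b, c, d) := q in [:: triple_code a b c; triple_code a b d].

Lemma vertex_code_triangles q : map vertex_code (quad_triangles q) = triangle_codes q.
Proof.
have set3 a b c : vertex_code [set a; b; c] = triple_code a b c.
  by apply: eq_map => x; rewrite !inE -orbA.
by case: q => [[[a b] c] d]; rewrite /= !set3.
Qed.

Definition common_blocks (l1 l2 : seq quad) : nat :=
  count_common (map block_code l1) (map block_code l2).

Definition common_triangles (l1 l2 : seq quad) : nat :=
  count_common (flatten (map triangle_codes l1)) (flatten (map triangle_codes l2)).

Lemma card_common_blocks l1 l2 : {subset l1 <= blocks6} -> {subset l2 <= blocks6} ->
  #|[set:: map block_of l1] :&: [set:: map block_of l2]| = common_blocks l1 l2.
Proof.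
move=> l16 l26; rewrite (card_setI_seq (f := edge_code)).
  by rewrite -!map_comp !(@eq_map _ _ (edge_code \o block_of) _ edge_code_block_of).
rewrite -map_cat => _ _ /mapP[q ql ->] /mapP[r rl ->].
by move: ql rl; rewrite !mem_cat => /orP[/l16|/l26] q6 /orP[/l16|/l26] r6;
  apply: edge_code_inj; apply: block_of_sub.
Qed.

Lemma card_common_triangles l1 l2 : {subset l1 <= blocks6} -> {subset l2 <= blocks6} ->
  #|triangles_of [set:: map block_of l1] :&: triangles_of [set:: map block_of l2]| =
  common_triangles l1 l2.
Proof.
move=> l16 l26; rewrite !triangles_of_blocks //.
rewrite (card_setI_seq (f := vertex_code)); last by move=> ? ? _ _; apply: vertex_code_inj.
rewrite !map_flatten -!map_comp.
by rewrite !(@eq_map _ _ (map vertex_code \o quad_triangles) _ vertex_code_triangles).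
Qed.

Definition disjoint_or_equal (s t : nat) : bool :=
  (s == 0) && (t <= 3) || (s == 3) && (t == 6).

Lemma designs6_pairwise :
  all (fun l1 => all (fun l2 => disjoint_or_equal (common_blocks l1 l2) (common_triangles l1 l2))
                     designs6) designs6.
Proof. by vm_compute. Qed.

Lemma design6_intersection (D1 D2 : {set {set {set 'I_6}}}) :
  is_design D1 -> is_design D2 ->
  disjoint_or_equal #|D1 :&: D2| #|triangles_of D1 :&: triangles_of D2|.
Proof.
move=> D1d D2d.
have [l1 l1G [l16 ->]] := design6_classification D1d.
have [l2 l2G [l26 ->]] := design6_classification D2d.
rewrite card_common_blocks // card_common_triangles //.
exact: allP (allP designs6_pairwise l1 l1G) l2 l2G.
Qed.

Theorem theorem4p3 : forall s t : nat, Fin 6 s t <-> Adm 6 s t.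
Proof.
have bv : b_v 6 = 3 by [].
move=> s t; split.
  case=> D1 [D2 [D1d D2d sE tE]].
  split; [|by exists D1, D2 | by exists D1, D2].
  move: (design6_intersection D1d D2d); rewrite sE tE bv.
  by case/orP=> /andP[/eqP-> ?]; lia.
case=> st [D1 [D2 [D1d D2d sE]]] [D3 [D4 [D3d D4d tE]]]; rewrite -sE bv in st tE *.
case/orP: (design6_intersection D1d D2d) => /andP[/eqP s12 T12]; rewrite s12 in st tE *.
  case/orP: (design6_intersection D3d D4d) => /andP[/eqP s34 T34].
    by exists D3, D4.
  by exfalso; move: T34 st; rewrite tE; lia.
by exists D1, D2; split => //; move: T12 st => /eqP->; lia.
Qed.
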